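(* Let $G$ be a strongly connected digraph with $N>2$ nodes in which all nodes run the Privacy-Preserving Push-Sum Algorithm described in the context. Let $\mathcal A\subset\mathcal V$ be a set of honest-but-curious nodes, $\mathcal L=\mathcal V\setminus\mathcal A$, and $i\in\mathcal L$. If $N_i^{out}\cup N_i^{in}\not\subseteq\mathcal A$, then the privacy of node $i$ is preserved against $\mathcal A$, i.e., for every $\kappa\in\mathbb N$ and every feasible information sequence $\mathcal I_{\mathcal A}(0:\kappa)$, $\mathrm{Diam}(\mathcal I_{\mathcal A}(0:\kappa))=\infty$.
   Context: Digraph conventions: $\mathcal V=\{1,\dots,N\}$, no self-loops; $(j,i)\in\mathcal E$ means node $i$ can send messages to node $j$. $N_i^{in}=\{j:(i,j)\in\mathcal E\}$, $N_i^{out}=\{j:(j,i)\in\mathcal E\}$. Strongly connected: a directed path exists from any node to any other node. Privacy-Preserving Push-Sum Algorithm (each node $i$ has a private real initial state $x_i(0)$; $M>0$ is a fixed constant). Initialization: node $i$ draws $x^\alpha_{i,1}(0)\sim U(-M,M)$ and sets $x^\beta_{i,1}(0)=2x_i(0)-x^\alpha_{i,1}(0)$, $x^\alpha_{i,2}(0)=0$, $x^\beta_{i,2}(0)=2$. Weights: at $k=0$, node $i$ draws the numbers $\{p_{ji}(0):j\in N_i^{out}\cup\{i\}\}$ and $\alpha_i(0)$ independently from $\mathcal N(0,M)$ and normalizes them so that $\sum_{j=1}^N p_{ji}(0)+\alpha_i(0)=1$; at each $k\ge1$, node $i$ draws $\{p_{ji}(k):j\in N_i^{out}\cup\{i\}\}$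 and $\alpha_i(k)$ independently from $U(0,1)$ and normalizes them so that $\sum_{j=1}^N p_{ji}(k)+\alpha_i(k)=1$; in all cases $p_{ji}(k)=0$ if $j\notin N_i^{out}\cup\{i\}$. State update, for $k\ge0$, $l=1,2$: node $i$ sends $p_{ji}(k)x^\alpha_{i,l}(k)$ to each $j\in N_i^{out}$ and updates $$x^\alpha_{i,l}(k+1)=\sum_{j\in N_i^{in}\cup\{i\}}p_{ij}(k)x^\alpha_{j,l}(k)+x^\beta_{i,l}(k),\qquad x^\beta_{i,l}(k+1)=\alpha_i(k)x^\alpha_{i,l}(k).$$ Node $i$'s estimated average is $\hat x^{ave}_i(k+1)=x^\alpha_{i,1}(k+1)/x^\alpha_{i,2}(k+1)$. The substate $x^\beta_{i,l}$ is never transmitted. Honest-but-curious nodes: nodes that follow the protocol, try to infer other nodes' private initial values from the data they receive, and may pool their data. For a set $\mathcal A$ of such nodes, the information available at time $k$ is $\mathcal I_{\mathcal A}(k)=\{\mathcal I_a(k):a\in\mathcal A\}$ with $$\mathcal I_a(k)=\{x^\alpha_{a,l}(k),x^\beta_{a,l}(k),p_{ja}(k),p_{ap}(k)x^\alpha_{p,l}(k): p\in N_a^{in},\ j\in\mathcal V,\ l=1,2\},$$ and $\mathcal I_{\mathcal A}(0:\kappa)=\bigcup_{0\le k\le\kappa}\mathcal I_{\mathcal A}(k)$. For a feasible $\mathcal I_{\mathcal A}(0:\kappa)$, $\Delta(\mathcal I_{\mathcal A}(0:\kappa),i)$ is the set of all values $x_i(0)=(x^\alpha_{i,1}(0)+x^\beta_{i,1}(0))/2$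 for which there exist initial substates $x^\alpha_{n,1}(0),x^\beta_{n,1}(0)$, $n\in\mathcal L$, and weights $p_{jn}(k),\alpha_n(k)$, $n\in\mathcal L$, $j\in\mathcal V$, $k=0,\dots,\kappa$ (satisfying the column normalization $\sum_j p_{jn}(k)+\alpha_n(k)=1$ and the sparsity pattern of the algorithm; at $k=0$ the weights may be arbitrary real numbers, as their generating distribution is Gaussian), such that the quantities of $\mathcal I_{\mathcal A}(0:\kappa)$ generated by the update rules (with $x^\alpha_{n,2}(0)=0$, $x^\beta_{n,2}(0)=2$) coincide with the given ones. $\mathrm{Diam}(\mathcal I_{\mathcal A}(0:\kappa))=\sup\{|x-x'|:x,x'\in\Delta(\mathcal I_{\mathcal A}(0:\kappa),i)\}$. The privacy of node $i\in\mathcal L$ is preserved against $\mathcal A$ if for every $\kappa\in\mathbb N$, $\mathrm{Diam}(\mathcal I_{\mathcal A}(0:\kappa))=\infty$ for every feasible $\mathcal I_{\mathcal A}(0:\kappa)$. *)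

From Stdlib Require Import Reals List Arith Relations.
From Coquelicot Require Import Coquelicot.
Open Scope R_scope.

(* Nodes are the naturals 0 .. N-1 (paper: 1 .. N).
   A digraph is a boolean relation E with  E j i = true  iff  (j,i) ∈ ℰ,
   i.e. node i can send messages to node j. *)

Definition sumV (N : nat) (f : nat -> R) : R :=
  fold_right (fun j acc => f j + acc) 0 (seq 0 N).

Definition digraph_on (N : nat) (E : nat -> nat -> bool) : Prop :=
  (forall j i, E j i = true -> (j < N)%nat /\ (i < N)%nat) /\
  (forall i, E i i = false).

Definition sends (E : nat -> nat -> bool) (i j : nat) : Prop := E j i = true.

Definition strongly_connected (N : nat) (E : nat -> nat -> bool) : Prop :=
  forall i j, (i < N)%nat -> (j < N)%nat -> i <> j -> clos_trans nat (sends E) i j.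

(* j ∈ N_i^in ∪ {i}   (N_i^in = {j : (i,j) ∈ ℰ}) *)
Definition in_nbr_or_self (E : nat -> nat -> bool) (i j : nat) : bool :=
  E i j || Nat.eqb j i.
(* j ∈ N_i^out ∪ {i}  (N_i^out = {j : (j,i) ∈ ℰ}) *)
Definition out_nbr_or_self (E : nat -> nat -> bool) (i j : nat) : bool :=
  E j i || Nat.eqb j i.

(* All random quantities of one execution:
   xa0 n = x^α_{n,1}(0), xb0 n = x^β_{n,1}(0),
   pw k j n = p_{jn}(k),  al k n = α_n(k). *)
Record params := mkParams {
  xa0 : nat -> R;
  xb0 : nat -> R;
  pw  : nat -> nat -> nat -> R;
  al  : nat -> nat -> R }.

Definition x0 (P : params) (n : nat) : R := (xa0 P n + xb0 P n) / 2.

(* the substates (x^α_{.,l}(k), x^β_{.,l}(k)), l = 1 or 2 *)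
Fixpoint state (N : nat) (E : nat -> nat -> bool) (P : params) (l : nat) (k : nat)
  : (nat -> R) * (nat -> R) :=
  match k with
  | O => if Nat.eqb l 1 then (xa0 P, xb0 P) else (fun _ => 0, fun _ => 2)
  | S k' =>
      let (a, b) := state N E P l k' in
      (fun i => sumV N (fun j => if in_nbr_or_self E i j then pw P k' i j * a j else 0)
                + b i,
       fun i => al P k' i * a i)
  end.

Definition xa (N : nat) E P l k n : R := fst (state N E P l k) n.
Definition xb (N : nat) E P l k n : R := snd (state N E P l k) n.

(* Admissible weights of node n at time k: sparsity pattern and column
   normalisation; for k >= 1 the weights are (normalised) U(0,1) draws,
   hence strictly positive on the pattern; at k = 0 they are arbitrary reals
   (normalised Gaussians). *)
Definition valid_weights (N : nat) E (P : params) (k n : nat) : Prop :=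
  (forall j, out_nbr_or_self E n j = false -> pw P k j n = 0) /\
  sumV N (fun j => pw P k j n) + al P k n = 1 /\
  ((1 <= k)%nat ->
     (forall j, out_nbr_or_self E n j = true -> 0 < pw P k j n) /\ 0 < al P k n).

Definition valid_run (N : nat) E (M : R) (P : params) : Prop :=
  (forall n, (n < N)%nat -> - M < xa0 P n < M) /\
  (forall k n, (n < N)%nat -> valid_weights N E P k n).

(* The data I_A(k) generated by Q coincides with that generated by P. *)
Definition info_match (N : nat) E (A : nat -> Prop) (P Q : params) (k : nat) : Prop :=
  forall a, (a < N)%nat -> A a ->
    (forall l, (l = 1 \/ l = 2)%nat ->
       xa N E Q l k a = xa N E P l k a /\
       xb N E Q l k a = xb N E P l k a /\
       (forall p, E a p = true ->
          pw Q k a p * xa N E Q l k p = pw P k a p * xa N E P l k p)) /\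
    (forall j, (j < N)%nat -> pw Q k j a = pw P k j a).

(* Δ(I_A(0:κ), i) for the information generated by the run P:
   the set of values x_i(0) compatible with I_A(0:κ), where only the initial
   substates and the weights of nodes in L = V \ A are unknown. *)
Definition DeltaSet (N : nat) E (A : nat -> Prop) (P : params) (kappa i : nat) (x : R) : Prop :=
  exists Q : params,
    (forall n, (n < N)%nat -> A n -> xa0 Q n = xa0 P n /\ xb0 Q n = xb0 P n) /\
    (forall k n, (k <= kappa)%nat -> (n < N)%nat -> A n ->
        al Q k n = al P k n /\ (forall j, pw Q k j n = pw P k j n)) /\
    (forall k n, (k <= kappa)%nat -> (n < N)%nat -> ~ A n -> valid_weights N E Q k n) /\
    (forall k, (k <= kappa)%nat -> info_match N E A P Q k) /\
    x = x0 Q i.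

Definition DiamA (S : R -> Prop) : Rbar :=
  Lub_Rbar (fun d => exists x x', S x /\ S x' /\ d = Rabs (x - x')).

From Stdlib Require Import Reals List Lra Lia.
From Coquelicot Require Import Coquelicot.
Open Scope R_scope.

(* Let u -> v be an edge between two nodes outside A (one of them
   being i).  From a run P we build a run Q = perturb P u v d that changes only
   data the coalition never sees: node u starts with x^α_{u,1}(0) = 1 and
   rescales its time-0 column of weights by the old x^α_{u,1}(0), so that every
   message it sends at time 0 is unchanged, except that it pushes an extra mass
   d to v.  Node v absorbs d into its hidden substate x^β_{v,1}, and node u
   absorbs the excess of its self-weight (needed for column normalisation) into
   x^β_{u,1}.  This is admissible because time-0 weights may be arbitrary
   reals (only their column sums are constrained).  Hence all substates coincide with those of P from time 1 on
   (states_agree_from_1), all information of A coincides at every time, and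
   the private values change by x_u(0) + d/2 and x_v(0) - d/2.  Since d is an
   arbitrary real, Δ(I_A(0:κ), i) contains a whole translate of the real line,
   so its diameter is infinite (diam_full_line). *)

Lemma sumV_ext N f g : (forall j, f j = g j) -> sumV N f = sumV N g.
Proof.
  intros H. unfold sumV. induction (seq 0 N) as [|m l IH]; simpl; [reflexivity|].
  rewrite H, IH. reflexivity.
Qed.

Lemma sumV_plus N f g : sumV N (fun j => f j + g j) = sumV N f + sumV N g.
Proof. unfold sumV. induction (seq 0 N) as [|m l IH]; simpl; [lra|rewrite IH; lra]. Qed.

Lemma sumV_scal N f c : sumV N (fun j => f j * c) = sumV N f * c.
Proof. unfold sumV. induction (seq 0 N) as [|m l IH]; simpl; [ring|rewrite IH; ring]. Qed.

Lemma sum_list_indicator (l : list nat) v c :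
  NoDup l -> In v l ->
  fold_right (fun j acc => (if Nat.eqb j v then c else 0) + acc) 0 l = c.
Proof.
  induction l as [|m l IH]; simpl; intros Hnd Hin; [contradiction|].
  inversion Hnd as [|? ? Hm Hnd']; subst.
  destruct (Nat.eqb_spec m v) as [->|Hmv].
  - assert (Hzero : fold_right (fun j acc => (if Nat.eqb j v then c else 0) + acc) 0 l = 0).
    { clear IH Hin Hnd Hnd'. induction l as [|m' l IH']; simpl; [reflexivity|].
      destruct (Nat.eqb_spec m' v) as [->|_]; [exfalso; apply Hm; left; reflexivity|].
      rewrite IH'; [lra|intros H; apply Hm; right; exact H]. }
    rewrite Hzero. lra.
  - rewrite IH; [lra|exact Hnd'|destruct Hin; [congruence|assumption]].
Qed.

Lemma sumV_indicator N v c : (v < N)%nat -> sumV N (fun j => if Nat.eqb j v then c else 0) = c.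
Proof. intros Hv. apply sum_list_indicator; [apply seq_NoDup|apply in_seq; lia]. Qed.

Lemma diam_full_line (S : R -> Prop) c : (forall s, S (c + s)) -> DiamA S = p_infty.
Proof.
  intros HS. unfold DiamA. apply is_lub_Rbar_unique. split.
  - intros x _. exact I.
  - intros [b| |] Hb; simpl; auto.
    + assert (Hbig : Rabs (Rabs b + 1) <= b).
      { apply Hb. exists (c + (Rabs b + 1)), (c + 0).
        repeat split; auto. f_equal. ring. }
      rewrite Rabs_pos_eq in Hbig by (pose proof (Rabs_pos b); lra).
      pose proof (Rle_abs b). lra.
    + apply (Hb (Rabs ((c + 0) - (c + 0)))). exists (c + 0), (c + 0). auto.
Qed.

Lemma xa_0 N E P l n : xa N E P l 0 n = if Nat.eqb l 1 then xa0 P n else 0.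
Proof. unfold xa; simpl; destruct (Nat.eqb l 1); reflexivity. Qed.

Lemma xb_0 N E P l n : xb N E P l 0 n = if Nat.eqb l 1 then xb0 P n else 2.
Proof. unfold xb; simpl; destruct (Nat.eqb l 1); reflexivity. Qed.

Lemma xa_S N E P l k n : xa N E P l (S k) n =
  sumV N (fun j => if in_nbr_or_self E n j then pw P k n j * xa N E P l k j else 0)
  + xb N E P l k n.
Proof. unfold xa, xb; simpl; destruct (state N E P l k); reflexivity. Qed.

Lemma xb_S N E P l k n : xb N E P l (S k) n = al P k n * xa N E P l k n.
Proof. unfold xa, xb; simpl; destruct (state N E P l k); reflexivity. Qed.

(* The step k -> k+1 uses only the weights of time k, so two parameter sets
   with equal weights at all times k >= 1 and equal states at time 1 have
   equal states at every time k >= 1. *)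
Lemma states_agree_from_1 N E P Q l :
  (forall k j n, pw Q (S k) j n = pw P (S k) j n) ->
  (forall k n, al Q (S k) n = al P (S k) n) ->
  (forall n, xa N E Q l 1 n = xa N E P l 1 n /\ xb N E Q l 1 n = xb N E P l 1 n) ->
  forall k n, xa N E Q l (S k) n = xa N E P l (S k) n /\
              xb N E Q l (S k) n = xb N E P l (S k) n.
Proof.
  intros Hpw Hal H1 k. induction k as [|k IH]; intros n; [apply H1|].
  rewrite (xa_S N E Q l (S k) n), (xa_S N E P l (S k) n),
    (xb_S N E Q l (S k) n), (xb_S N E P l (S k) n),
    Hal, (proj1 (IH n)), (proj2 (IH n)).
  split; [|reflexivity]. f_equal. apply sumV_ext. intros j.
  rewrite Hpw, (proj1 (IH j)). reflexivity.
Qed.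

Lemma valid_weights_ext N E P Q k n :
  (forall j, pw Q k j n = pw P k j n) -> al Q k n = al P k n ->
  valid_weights N E P k n -> valid_weights N E Q k n.
Proof.
  intros Hpw Hal [Vpat [Vsum Vpos]]. split; [|split].
  - intros j Hj. rewrite Hpw; auto.
  - rewrite Hal, (sumV_ext N _ (fun j => pw P k j n)) by auto. exact Vsum.
  - intros Hk. destruct (Vpos Hk) as [Hp Ha].
    split; [intros j Hj; rewrite Hpw; auto|rewrite Hal; auto].
Qed.

(* Node u starts from x^α_{u,1}(0) = 1; its time-0 column
   is the old one scaled by x^α_{u,1}(0), plus a mass d sent to v and the
   self-weight excess needed for the column to sum to 1. *)

Definition self_excess (P : params) (u : nat) (d : R) : R := 1 - xa0 P u - d.

Definition perturbed_col (P : params) (u v : nat) (d : R) (j : nat) : R :=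
  pw P 0 j u * xa0 P u + (if Nat.eqb j v then d else 0)
  + (if Nat.eqb j u then self_excess P u d else 0).

Definition perturb (P : params) (u v : nat) (d : R) : params := mkParams
  (fun n => if Nat.eqb n u then 1 else xa0 P n)
  (fun n => if Nat.eqb n u then xb0 P u - self_excess P u d
            else if Nat.eqb n v then xb0 P v - d else xb0 P n)
  (fun k j n => if (Nat.eqb k 0 && Nat.eqb n u)%bool then perturbed_col P u v d j
                else pw P k j n)
  (fun k n => if (Nat.eqb k 0 && Nat.eqb n u)%bool then al P 0 u * xa0 P u
              else al P k n).

Lemma perturb_x0_u P u v d : x0 (perturb P u v d) u = x0 P u + d / 2.
Proof. unfold x0; simpl. rewrite Nat.eqb_refl. unfold self_excess. field. Qed.

Lemma perturb_x0_v P u v d : u <> v -> x0 (perturb P u v d) v = x0 P v - d / 2.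
Proof.
  intros Huv. unfold x0; simpl.
  rewrite (proj2 (Nat.eqb_neq v u)) by auto. rewrite Nat.eqb_refl. field.
Qed.

(* The messages received by node n at time 0 (first component) change by
   exactly d at v and by the self-weight excess at u; the edge u -> v makes
   both corrections actually delivered. *)
Lemma perturb_received_0 N E P u v d n :
  (u < N)%nat -> u <> v -> E v u = true ->
  sumV N (fun j => if in_nbr_or_self E n j
                   then pw (perturb P u v d) 0 n j * xa0 (perturb P u v d) j else 0)
  = sumV N (fun j => if in_nbr_or_self E n j then pw P 0 n j * xa0 P j else 0)
    + (if Nat.eqb n v then d else 0) + (if Nat.eqb n u then self_excess P u d else 0).
Proof.
  intros Hu Huv Hvu.
  rewrite (sumV_ext N _ (fun j => (if in_nbr_or_self E n j then pw P 0 n j * xa0 P j else 0)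
    + (if Nat.eqb j u then (if Nat.eqb n v then d else 0)
                         + (if Nat.eqb n u then self_excess P u d else 0) else 0))).
  - rewrite sumV_plus, sumV_indicator by exact Hu. ring.
  - intros j; simpl. destruct (Nat.eqb_spec j u) as [->|Hju]; [|ring].
    unfold perturbed_col, in_nbr_or_self.
    destruct (E n u) eqn:Enu; simpl; [ring|].
    destruct (Nat.eqb_spec u n) as [<-|Hun]; simpl.
    + rewrite Nat.eqb_refl, (proj2 (Nat.eqb_neq u v) Huv). ring.
    + destruct (Nat.eqb_spec n v) as [->|_]; [congruence|].
      destruct (Nat.eqb_spec n u); [congruence|]. ring.
Qed.

Lemma perturb_state_1 N E P u v d l n :
  (u < N)%nat -> u <> v -> E v u = true ->
  xa N E (perturb P u v d) l 1 n = xa N E P l 1 n /\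
  xb N E (perturb P u v d) l 1 n = xb N E P l 1 n.
Proof.
  intros Hu Huv Hvu. rewrite !xa_S, !xb_S, !xa_0, !xb_0.
  destruct (Nat.eqb l 1) eqn:Hl.
  - rewrite !(sumV_ext N (fun j => if in_nbr_or_self E _ j then _ * xa N E _ l 0 j else 0)
             (fun j => if in_nbr_or_self E n j then _ * _ else 0))
      by (intros j; rewrite xa_0, Hl; reflexivity).
    rewrite perturb_received_0 by assumption. simpl.
    destruct (Nat.eqb_spec n u) as [->|Hnu].
    + rewrite (proj2 (Nat.eqb_neq u v) Huv). split; ring.
    + split; [destruct (Nat.eqb_spec n v) as [->|_]; ring|reflexivity].
  - split; [|ring]. f_equal.
    + apply sumV_ext. intros j. rewrite !xa_0, Hl.
      destruct (in_nbr_or_self E n j); ring.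
Qed.

Section Perturbation.
Variables (N : nat) (E : nat -> nat -> bool) (M : R) (A : nat -> Prop) (P : params).
Variables (u v : nat) (d : R).
Hypothesis HP : valid_run N E M P.
Hypotheses (Hu : (u < N)%nat) (Hv : (v < N)%nat) (HAu : ~ A u) (HAv : ~ A v).
Hypotheses (Hvu : E v u = true) (Huv : u <> v).

Let Q := perturb P u v d.

Lemma perturb_other_node n : n <> u -> n <> v ->
  xa0 Q n = xa0 P n /\ xb0 Q n = xb0 P n /\
  (forall k, al Q k n = al P k n /\ (forall j, pw Q k j n = pw P k j n)).
Proof.
  intros Hnu Hnv. simpl.
  rewrite (proj2 (Nat.eqb_neq n u) Hnu), (proj2 (Nat.eqb_neq n v) Hnv).
  repeat split; intros; rewrite Bool.andb_false_r; reflexivity.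
Qed.

Lemma perturb_states k n l :
  xa N E Q l (S k) n = xa N E P l (S k) n /\ xb N E Q l (S k) n = xb N E P l (S k) n.
Proof.
  apply states_agree_from_1; [reflexivity|reflexivity|].
  intros m. apply perturb_state_1; assumption.
Qed.

Lemma perturb_weights_u : valid_weights N E Q 0 u.
Proof.
  destruct (proj2 HP 0%nat u Hu) as [Vpat [Vsum _]].
  split; [|split].
  - intros j Hj. simpl. rewrite Nat.eqb_refl. unfold perturbed_col.
    unfold out_nbr_or_self in Hj. apply Bool.orb_false_iff in Hj as [Eju Hju].
    rewrite Vpat by (unfold out_nbr_or_self; rewrite Eju, Hju; reflexivity).
    rewrite Hju. destruct (Nat.eqb_spec j v) as [->|_]; [congruence|]. ring.
  - simpl. rewrite Nat.eqb_refl. unfold perturbed_col.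
    rewrite !sumV_plus, !sumV_indicator by assumption.
    rewrite sumV_scal. unfold self_excess.
    replace (sumV N (fun j => pw P 0 j u)) with (1 - al P 0 u) by lra. ring.
  - intros Hk. lia.
Qed.

Lemma perturb_weights_valid k n : (n < N)%nat -> valid_weights N E Q k n.
Proof.
  intros Hn. destruct (Nat.eqb_spec k 0) as [->|Hk]; [destruct (Nat.eqb_spec n u) as [->|Hnu]|].
  - exact perturb_weights_u.
  - apply (valid_weights_ext N E P); [intros j| |apply (proj2 HP); exact Hn];
      simpl; rewrite (proj2 (Nat.eqb_neq n u) Hnu); reflexivity.
  - apply (valid_weights_ext N E P); [intros j| |apply (proj2 HP); exact Hn];
      simpl; rewrite (proj2 (Nat.eqb_neq k 0) Hk); reflexivity.
Qed.

Lemma coalition_untouched a : A a -> a <> u /\ a <> v.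
Proof. intros HAa. split; intros ->; contradiction. Qed.

Lemma perturb_info_match k : info_match N E A P Q k.
Proof.
  intros a _ HAa. destruct (coalition_untouched a HAa) as [Hau Hav].
  split; [|intros j _; apply (perturb_other_node a Hau Hav)].
  intros l _. destruct k as [|k].
  - rewrite !xa_0, !xb_0. simpl.
    rewrite (proj2 (Nat.eqb_neq a u) Hau), (proj2 (Nat.eqb_neq a v) Hav).
    repeat split. intros p _. rewrite !xa_0. simpl.
    destruct (Nat.eqb_spec p u) as [->|_]; [|reflexivity].
    unfold perturbed_col. rewrite (proj2 (Nat.eqb_neq a u) Hau), (proj2 (Nat.eqb_neq a v) Hav).
    destruct (Nat.eqb l 1); ring.
  - rewrite (proj1 (perturb_states k a l)), (proj2 (perturb_states k a l)).
    repeat split. intros p _. rewrite (proj1 (perturb_states k p l)). reflexivity.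
Qed.

Lemma perturb_in_Delta kappa w : DeltaSet N E A P kappa w (x0 Q w).
Proof.
  exists Q. split; [|split; [|split; [|split]]].
  - intros n _ HAn. destruct (coalition_untouched n HAn) as [Hnu Hnv].
    destruct (perturb_other_node n Hnu Hnv) as [Hxa [Hxb _]]. split; assumption.
  - intros k n _ _ HAn. destruct (coalition_untouched n HAn) as [Hnu Hnv].
    apply (perturb_other_node n Hnu Hnv).
  - intros k n _ Hn _. apply perturb_weights_valid. exact Hn.
  - intros k _. apply perturb_info_match.
  - reflexivity.
Qed.

End Perturbation.

Theorem theorem2 (N : nat) (E : nat -> nat -> bool) (M : R)
  (A : nat -> Prop) (i : nat) :
  (2 < N)%nat ->
  digraph_on N E ->
  strongly_connected N E ->
  0 < M ->
  (forall a, A a -> (a < N)%nat) ->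
  (i < N)%nat -> ~ A i ->
  (exists j, (j < N)%nat /\ (E j i = true \/ E i j = true) /\ ~ A j) ->
  forall P : params, valid_run N E M P ->
  forall kappa : nat, DiamA (DeltaSet N E A P kappa i) = p_infty.
Proof.
  intros _ [_ Hloop] _ _ _ Hi HAi [j [Hj [Hedge HAj]]] P HP kappa.
  apply (diam_full_line _ (x0 P i)). intros s.
  destruct Hedge as [Eji | Eij].
  -
    assert (Hij : i <> j) by (intros ->; rewrite Hloop in Eji; discriminate).
    replace (x0 P i + s) with (x0 (perturb P i j (2 * s)) i)
      by (rewrite perturb_x0_u; field).
    apply (perturb_in_Delta N E M); assumption.
  -
    assert (Hji : j <> i) by (intros ->; rewrite Hloop in Eij; discriminate).
    replace (x0 P i + s) with (x0 (perturb P j i (- (2 * s))) i)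
      by (rewrite perturb_x0_v by exact Hji; field).
    apply (perturb_in_Delta N E M); assumption.
Qed.
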